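(* Let $A$ be a double Poisson algebra and $(M,\{\!\{-,-\}\!\}_M)$ a double Poisson $A$-bimodule, and set $\{-,-\}_M=\mu_M\circ\{\!\{-,-\}\!\}_M:A\times M\to M$. Then $\{-,-\}_M$ induces well-defined maps $A_\natural\times M\to M$ and $A_\natural\times M_\natural\to M_\natural$, where $A_\natural=A/[A,A]$ and $M_\natural=M/[A,M]$.
   Context: $A$ is a unital associative $k$-algebra. A double bracket on $A$ is a bilinear map $\{\!\{-,-\}\!\}:A\times A\to A\otimes A$ with $\{\!\{a,b\}\!\}=-\{\!\{b,a\}\!\}^\circ$ (where $(u\otimes v)^\circ=v\otimes u$) and $\{\!\{a,bc\}\!\}=b\{\!\{a,c\}\!\}+\{\!\{a,b\}\!\}c$ for the outer bimodule structure $b(a_1\otimes a_2)c=ba_1\otimes a_2c$. The inner structure is $b*(a_1\otimes a_2)*c=a_1c\otimes ba_2$. Writing $\{\!\{a,b_1\otimes\cdots\otimes b_n\}\!\}_L=\{\!\{a,b_1\}\!\}\otimes b_2\otimes\cdots\otimes b_n$ and $\sigma_s$ for the permutation of tensor factors $b_1\otimes\cdots\otimes b_n\mapsto b_{s^{-1}(1)}\otimes\cdots\otimes b_{s^{-1}(n)}$, $A$ is a double Poisson algebra if $\{\!\{a,\{\!\{b,c\}\!\}\}\!\}_L+\sigma_{(123)}\{\!\{b,\{\!\{c,a\}\!\}\}\!\}_L+\sigma_{(132)}\{\!\{c,\{\!\{a,b\}\!\}\}\!\}_L=0$. For an $A$-bimodule $M$, a double Poisson bracket on $M$ is a bilinear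 $\{\!\{-,-\}\!\}_M:A\times M\to(A\otimes M)\oplus(M\otimes A)$ with (i) $\{\!\{a,bm\}\!\}_M=\{\!\{a,b\}\!\}m+b\{\!\{a,m\}\!\}_M$ and $\{\!\{a,mb\}\!\}_M=\{\!\{a,m\}\!\}_Mb+m\{\!\{a,b\}\!\}$, and (ii) $\{\!\{ab,m\}\!\}_M=a*\{\!\{b,m\}\!\}_M+\{\!\{a,m\}\!\}_M*b$ (inner actions). Put $\{\!\{m,b\}\!\}_M=-(\{\!\{b,m\}\!\}_M)^\circ$; if $\{\!\{b,m\}\!\}_M=(b_1\otimes m_1)\oplus(m_2\otimes b_2)$ set $\{\!\{a,\{\!\{b,m\}\!\}_M\}\!\}_L=(\{\!\{a,b_1\}\!\}\otimes m_1)\oplus(\{\!\{a,m_2\}\!\}_M\otimes b_2)$, and $\{\!\{m,\{\!\{a,b\}\!\}\}\!\}_L=\{\!\{m,\{\!\{a,b\}\!\}'\}\!\}_M\otimes\{\!\{a,b\}\!\}''$. $M$ is a double Poisson $A$-bimodule if moreover (iii) $\{\!\{a,\{\!\{b,m\}\!\}_M\}\!\}_L+\sigma_{(123)}\{\!\{b,\{\!\{m,a\}\!\}_M\}\!\}_L+\sigma_{(132)}\{\!\{m,\{\!\{a,b\}\!\}\}\!\}_L=0$. $\mu_M:(A\otimes M)\oplus(M\otimes A)\to M$ is the bimodule action map. *)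

(* Double Poisson algebras and double Poisson bimodules,
   with tensor products over k modelled by finite formal sums of pure
   tensors, two formal sums being equal in U (x)_k V iff every k-bilinear
   map out of U x V (into any k-module) takes the same value on them
   (universal property of the tensor product). *)
From HB Require Import structures.
From mathcomp Require Import all_boot all_algebra.
Set Implicit Arguments. Unset Strict Implicit. Unset Printing Implicit Defensive.
Import GRing.Theory.
Local Open Scope ring_scope.

Section Tensors.
Variable k : fieldType.

Definition bilinear_map (U V W : lmodType k) (f : U -> V -> W) : Prop :=
  (forall v c u u', f (c *: u + u') v = c *: f u v + f u' v) /\
  (forall u c v v', f u (c *: v + v') = c *: f u v + f u v').

Definition trilinear_map (U V X W : lmodType k) (f : U -> V -> X -> W) : Prop :=
  [/\ (forall v x c u u', f (c *: u + u') v x = c *: f u v x + f u' v x),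
      (forall u x c v v', f u (c *: v + v') x = c *: f u v x + f u v' x) &
      (forall u v c x x', f u v (c *: x + x') = c *: f u v x + f u v x')].

Definition tens2 (U V : Type) := seq (U * V).
Definition tens3 (U V X : Type) := seq (U * V * X).

Definition teq2 (U V : lmodType k) (s t : tens2 U V) : Prop :=
  forall (W : lmodType k) (f : U -> V -> W), bilinear_map f ->
    \sum_(p <- s) f p.1 p.2 = \sum_(p <- t) f p.1 p.2.

Definition teq3 (U V X : lmodType k) (s t : tens3 U V X) : Prop :=
  forall (W : lmodType k) (f : U -> V -> X -> W), trilinear_map f ->
    \sum_(p <- s) f p.1.1 p.1.2 p.2 = \sum_(p <- t) f p.1.1 p.1.2 p.2.

Definition tscale (U : lmodType k) (V : Type) (c : k) (s : tens2 U V) : tens2 U V :=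
  map (fun p => (c *: p.1, p.2)) s.
Definition topp (U : lmodType k) (V : Type) (s : tens2 U V) : tens2 U V :=
  map (fun p => (- p.1, p.2)) s.
Definition tflip (U V : Type) (s : tens2 U V) : tens2 V U :=
  map (fun p => (p.2, p.1)) s.

Definition s123 (X Y Z : Type) (p : X * Y * Z) : Z * X * Y := (p.2, p.1.1, p.1.2).
Definition s132 (X Y Z : Type) (p : X * Y * Z) : Y * Z * X := (p.1.2, p.2, p.1.1).

End Tensors.

Section DoublePoissonAlgebra.
Variables (k : fieldType) (A : algType k).

Definition touterL (b : A) (s : tens2 A A) : tens2 A A := map (fun p => (b * p.1, p.2)) s.
Definition touterR (s : tens2 A A) (c : A) : tens2 A A := map (fun p => (p.1, p.2 * c)) s.

Definition double_bracket (dbr : A -> A -> tens2 A A) : Prop :=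
  [/\ (forall c a a' b, teq2 (dbr (c *: a + a') b) (tscale c (dbr a b) ++ dbr a' b)),
      (forall c a b b', teq2 (dbr a (c *: b + b')) (tscale c (dbr a b) ++ dbr a b')),
      (forall a b, teq2 (dbr a b) (topp (tflip (dbr b a)))) &
      (forall a b c, teq2 (dbr a (b * c)) (touterL b (dbr a c) ++ touterR (dbr a b) c))].

Definition dbrL (dbr : A -> A -> tens2 A A) (a : A) (t : tens2 A A) : tens3 A A A :=
  flatten [seq [seq (q.1, q.2, p.2) | q <- dbr a p.1] | p <- t].

Definition double_poisson_algebra (dbr : A -> A -> tens2 A A) : Prop :=
  double_bracket dbr /\
  forall a b c,
    teq3 (dbrL dbr a (dbr b c) ++ map (@s123 _ _ _) (dbrL dbr b (dbr c a))
            ++ map (@s132 _ _ _) (dbrL dbr c (dbr a b))) [::].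

End DoublePoissonAlgebra.

Section Bimodules.
Variables (k : fieldType) (A : algType k) (M : lmodType k).
Variables (la : A -> M -> M) (ra : M -> A -> M).

Definition is_bimodule : Prop :=
  [/\ bilinear_map la, bilinear_map (fun (a : A) (m : M) => ra m a),
      (forall m, la 1 m = m) /\ (forall m, ra m 1 = m),
      (forall a b m, la (a * b) m = la a (la b m)) /\
      (forall a b m, ra m (a * b) = ra (ra m a) b) &
      (forall a b m, la a (ra m b) = ra (la a m) b)].

Definition dsum := (tens2 A M * tens2 M A)%type.
Definition dsum_eq (x y : dsum) : Prop := teq2 x.1 y.1 /\ teq2 x.2 y.2.
Definition dsadd (x y : dsum) : dsum := (x.1 ++ y.1, x.2 ++ y.2).
Definition dsscale (c : k) (x : dsum) : dsum := (tscale c x.1, tscale c x.2).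

Definition dsoutL (b : A) (x : dsum) : dsum :=
  (map (fun p => (b * p.1, p.2)) x.1, map (fun p => (la b p.1, p.2)) x.2).
Definition dsoutR (x : dsum) (b : A) : dsum :=
  (map (fun p => (p.1, ra p.2 b)) x.1, map (fun p => (p.1, p.2 * b)) x.2).
(* inner actions: b * (u (x) v) * c = u c (x) b v *)
Definition dsinL (b : A) (x : dsum) : dsum :=
  (map (fun p => (p.1, la b p.2)) x.1, map (fun p => (p.1, b * p.2)) x.2).
Definition dsinR (x : dsum) (c : A) : dsum :=
  (map (fun p => (p.1 * c, p.2)) x.1, map (fun p => (ra p.1 c, p.2)) x.2).
Definition tactR (t : tens2 A A) (m : M) : tens2 A M := map (fun p => (p.1, la p.2 m)) t.
Definition tactL (m : M) (t : tens2 A A) : tens2 M A := map (fun p => (ra m p.1, p.2)) t.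

Record tri := Tri { tAAM : tens3 A A M; tAMA : tens3 A M A; tMAA : tens3 M A A }.
Definition tri_eq (x y : tri) : Prop :=
  [/\ teq3 (tAAM x) (tAAM y), teq3 (tAMA x) (tAMA y) & teq3 (tMAA x) (tMAA y)].
Definition tri_add (x y : tri) : tri :=
  Tri (tAAM x ++ tAAM y) (tAMA x ++ tAMA y) (tMAA x ++ tMAA y).
Definition tri0 : tri := Tri [::] [::] [::].
Definition sig123 (x : tri) : tri :=
  Tri (map (@s123 _ _ _) (tAMA x)) (map (@s123 _ _ _) (tMAA x)) (map (@s123 _ _ _) (tAAM x)).
Definition sig132 (x : tri) : tri :=
  Tri (map (@s132 _ _ _) (tMAA x)) (map (@s132 _ _ _) (tAAM x)) (map (@s132 _ _ _) (tAMA x)).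

Variables (dbr : A -> A -> tens2 A A) (dbrM : A -> M -> dsum).

(* {{m, b}}_M = - ({{b, m}}_M)^o *)
Definition dbrMrev (m : M) (b : A) : dsum :=
  (topp (tflip (dbrM b m).2), topp (tflip (dbrM b m).1)).

(* {{a, (b1 (x) m1) (+) (m2 (x) b2)}}_L = ({{a,b1}} (x) m1) (+) ({{a,m2}}_M (x) b2) *)
Definition dbrL_ds (a : A) (x : dsum) : tri :=
  Tri (flatten [seq [seq (q.1, q.2, p.2) | q <- dbr a p.1] | p <- x.1])
      (flatten [seq [seq (q.1, q.2, p.2) | q <- (dbrM a p.1).1] | p <- x.2])
      (flatten [seq [seq (q.1, q.2, p.2) | q <- (dbrM a p.1).2] | p <- x.2]).

Definition dbrL_M (m : M) (t : tens2 A A) : tri :=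
  Tri [::]
      (flatten [seq [seq (q.1, q.2, p.2) | q <- (dbrMrev m p.1).1] | p <- t])
      (flatten [seq [seq (q.1, q.2, p.2) | q <- (dbrMrev m p.1).2] | p <- t]).

Definition double_poisson_bimodule : Prop :=
  [/\ (forall c a a' m, dsum_eq (dbrM (c *: a + a') m) (dsadd (dsscale c (dbrM a m)) (dbrM a' m))),
      (forall c a m m', dsum_eq (dbrM a (c *: m + m')) (dsadd (dsscale c (dbrM a m)) (dbrM a m'))),
      (forall a b m, dsum_eq (dbrM a (la b m)) (dsadd (tactR (dbr a b) m, [::]) (dsoutL b (dbrM a m))))
      /\ (forall a b m, dsum_eq (dbrM a (ra m b)) (dsadd (dsoutR (dbrM a m) b) ([::], tactL m (dbr a b)))),
      (forall a b m, dsum_eq (dbrM (a * b) m) (dsadd (dsinL a (dbrM b m)) (dsinR (dbrM a m) b))) &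
      (forall a b m, tri_eq (tri_add (dbrL_ds a (dbrM b m))
                              (tri_add (sig123 (dbrL_ds b (dbrMrev m a)))
                                       (sig132 (dbrL_M m (dbr a b))))) tri0)].

Definition brM (a : A) (m : M) : M :=
  \sum_(p <- (dbrM a m).1) la p.1 p.2 + \sum_(p <- (dbrM a m).2) ra p.1 p.2.

End Bimodules.

Inductive in_span (k : fieldType) (V : lmodType k) (P : V -> Prop) : V -> Prop :=
  | span0 : in_span P 0
  | spanS (c : k) (x v : V) : P x -> in_span P v -> in_span P (c *: x + v).

Definition commAA (k : fieldType) (A : algType k) : A -> Prop :=
  in_span (fun x : A => exists a b : A, x = a * b - b * a).
Definition commAM (k : fieldType) (A : algType k) (M : lmodType k)
  (la : A -> M -> M) (ra : M -> A -> M) : M -> Prop :=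
  in_span (fun x : M => exists (a : A) (m : M), x = la a m - ra m a).

(* Only the Leibniz rules (i) and (ii) are needed.  Since mu is insensitive to moving a
   factor between the two inner actions, mu (a * x) = mu (x * a), rule (ii)
   gives {ab, m} = {ba, m}, so {-, m} kills [A, A].  Since mu intertwines the
   outer actions with the actions on M, rule (i) gives
   {a, bn} - {a, nb} = (b X - X b) + sum (a1 a2 n - n a1 a2) with
   X = {a, n} and {{a, b}} = sum a1 (x) a2, an element of [A, M]. *)
From HB Require Import structures.
From mathcomp Require Import all_boot all_algebra.
Set Implicit Arguments. Unset Strict Implicit. Unset Printing Implicit Defensive.
Import GRing.Theory.
Local Open Scope ring_scope.

Section BilinearMaps.
Variables (k : fieldType) (U V W : lmodType k) (f : U -> V -> W).
Hypothesis f_bilinear : bilinear_map f.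

Lemma bilinear_map_addl u u' v : f (u + u') v = f u v + f u' v.
Proof. by have := f_bilinear.1 v 1 u u'; rewrite !scale1r. Qed.

Lemma bilinear_map_addr u v v' : f u (v + v') = f u v + f u v'.
Proof. by have := f_bilinear.2 u 1 v v'; rewrite !scale1r. Qed.

Lemma bilinear_map0l v : f 0 v = 0.
Proof. by apply: (@addrI _ (f 0 v)); rewrite -bilinear_map_addl !addr0. Qed.

Lemma bilinear_map0r u : f u 0 = 0.
Proof. by apply: (@addrI _ (f u 0)); rewrite -bilinear_map_addr !addr0. Qed.

Lemma bilinear_map_scalel c u v : f (c *: u) v = c *: f u v.
Proof. by have := f_bilinear.1 v c u 0; rewrite addr0 bilinear_map0l addr0. Qed.

End BilinearMaps.

Lemma bilinear_map_flip (k : fieldType) (U V W : lmodType k) (f : U -> V -> W) :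
  bilinear_map (fun v u => f u v) -> bilinear_map f.
Proof. by case=> fl fr; split=> *; [apply: fr | apply: fl]. Qed.

Section Span.
Variables (k : fieldType) (V : lmodType k) (P : V -> Prop).

Lemma in_span_add x y : in_span P x -> in_span P y -> in_span P (x + y).
Proof.
move=> Px Py; elim: Px => [|c x' v Px' _ IH]; first by rewrite add0r.
by rewrite -addrA; apply: spanS.
Qed.

Lemma in_span_scale c x : in_span P x -> in_span P (c *: x).
Proof.
elim=> [|d x' v Px' _ IH]; first by rewrite scaler0; apply: span0.
by rewrite scalerDr scalerA; apply: spanS.
Qed.

Lemma in_span_gen x : P x -> in_span P x.
Proof. by move=> Px; rewrite -[x]addr0 -[x]scale1r; apply: spanS => //; apply: span0. Qed.

Lemma in_span_sum (T : Type) (s : seq T) (F : T -> V) :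
  (forall p, in_span P (F p)) -> in_span P (\sum_(p <- s) F p).
Proof.
move=> PF; elim: s => [|p s IH]; first by rewrite big_nil; apply: span0.
by rewrite big_cons; apply: in_span_add.
Qed.

End Span.

Section BimoduleMultiplication.
Variables (k : fieldType) (A : algType k) (M : lmodType k).
Variables (la : A -> M -> M) (ra : M -> A -> M).
Hypotheses (la_bilinear : bilinear_map la) (ra_bilinear : bilinear_map ra).
Hypotheses (la_mul : forall a b m, la (a * b) m = la a (la b m))
           (ra_mul : forall a b m, ra m (a * b) = ra (ra m a) b)
           (la_ra : forall a b m, la a (ra m b) = ra (la a m) b).

Definition muM (x : dsum A M) : M :=
  \sum_(p <- x.1) la p.1 p.2 + \sum_(p <- x.2) ra p.1 p.2.

Lemma muM_eq x y : dsum_eq x y -> muM x = muM y.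
Proof. by case=> e1 e2; rewrite /muM (e1 _ la la_bilinear) (e2 _ ra ra_bilinear). Qed.

Lemma muM_add x y : muM (dsadd x y) = muM x + muM y.
Proof. by rewrite /muM !big_cat addrACA. Qed.

Lemma muM_scale c x : muM (dsscale c x) = c *: muM x.
Proof.
rewrite /muM /= !big_map scalerDr !scaler_sumr.
by congr (_ + _); apply: eq_bigr => p _; apply: bilinear_map_scalel.
Qed.

Lemma muM_inner a x : muM (dsinL la a x) = muM (dsinR ra x a).
Proof.
by rewrite /muM /= !big_map; congr (_ + _); apply: eq_bigr => p _;
  rewrite ?la_mul ?ra_mul.
Qed.

Lemma muM_outerL b x : muM (dsoutL la b x) = la b (muM x).
Proof.
have la_b_add := bilinear_map_addr la_bilinear b.
rewrite /muM /= !big_map la_b_add.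
rewrite !(big_morph (la b) la_b_add (bilinear_map0r la_bilinear b)).
by congr (_ + _); apply: eq_bigr => p _; rewrite ?la_mul ?la_ra.
Qed.

Lemma muM_outerR x b : muM (dsoutR ra x b) = ra (muM x) b.
Proof.
have ra_b_add x1 x2 := bilinear_map_addl ra_bilinear x1 x2 b.
rewrite /muM /= !big_map ra_b_add.
rewrite !(big_morph (ra^~ b) ra_b_add (bilinear_map0l ra_bilinear b)).
by congr (_ + _); apply: eq_bigr => p _; rewrite ?ra_mul ?la_ra.
Qed.

Section Bracket.
Variables (dbr : A -> A -> tens2 A A) (dbrM : A -> M -> dsum A M).
Hypotheses
  (dbrM_linearl : forall c a a' m,
     dsum_eq (dbrM (c *: a + a') m) (dsadd (dsscale c (dbrM a m)) (dbrM a' m)))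
  (dbrM_linearr : forall c a m m',
     dsum_eq (dbrM a (c *: m + m')) (dsadd (dsscale c (dbrM a m)) (dbrM a m')))
  (dbrM_la : forall a b m,
     dsum_eq (dbrM a (la b m)) (dsadd (tactR la (dbr a b) m, [::]) (dsoutL la b (dbrM a m))))
  (dbrM_ra : forall a b m,
     dsum_eq (dbrM a (ra m b)) (dsadd (dsoutR ra (dbrM a m) b) ([::], tactL ra m (dbr a b))))
  (dbrM_mul : forall a b m,
     dsum_eq (dbrM (a * b) m) (dsadd (dsinL la a (dbrM b m)) (dsinR ra (dbrM a m) b))).

Local Notation br := (brM la ra dbrM).

Lemma brM_linearl c a a' m : br (c *: a + a') m = c *: br a m + br a' m.
Proof. by rewrite /brM -/(muM _) (muM_eq (dbrM_linearl c a a' m)) muM_add muM_scale. Qed.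

Lemma brM_linearr c a m m' : br a (c *: m + m') = c *: br a m + br a m'.
Proof. by rewrite /brM -/(muM _) (muM_eq (dbrM_linearr c a m m')) muM_add muM_scale. Qed.

Lemma brM_subl a a' m : br (a - a') m = br a m - br a' m.
Proof. by have := brM_linearl (-1) a' a m; rewrite !scaleN1r addrC [_ + br a m]addrC. Qed.

Lemma brM_subr a m m' : br a (m - m') = br a m - br a m'.
Proof. by have := brM_linearr (-1) a m' m; rewrite !scaleN1r addrC [_ + br a m]addrC. Qed.

Lemma brM_mulC a b m : br (a * b) m = br (b * a) m.
Proof.
rewrite /brM -!/(muM _) (muM_eq (dbrM_mul a b m)) (muM_eq (dbrM_mul b a m)).
by rewrite !muM_add !muM_inner addrC.
Qed.

Lemma brM_commAA x m : commAA x -> br x m = 0.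
Proof.
elim=> [|c x' v [a [b ->]] _ IH]; first by rewrite -(subrr 0) brM_subl subrr.
by rewrite brM_linearl IH brM_subl brM_mulC subrr scaler0 add0r.
Qed.

Lemma brM_eq_commAA a a' m : commAA (a - a') -> br a m = br a' m.
Proof. by move=> aa'; apply/eqP; rewrite -subr_eq0 -brM_subl brM_commAA. Qed.

Lemma brM_commutator a b n : commAM la ra (br a (la b n - ra n b)).
Proof.
rewrite brM_subr /brM -!/(muM _) (muM_eq (dbrM_la a b n)) (muM_eq (dbrM_ra a b n)).
rewrite !muM_add muM_outerL muM_outerR /muM /= !big_nil !addr0 !add0r !big_map.
have regroup (s t u w : M) : (s + u) - (t + w) = (s - w) + (u - t).
  by rewrite opprD [- t - w]addrC addrACA.
rewrite regroup -sumrB; apply: in_span_add.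
  apply: in_span_sum => p; apply: in_span_gen; exists (p.1 * p.2), n.
  by rewrite la_mul ra_mul.
by apply: in_span_gen; exists b, (muM (dbrM a n)).
Qed.

Lemma brM_commAM a m m' : commAM la ra (m - m') -> commAM la ra (br a m - br a m').
Proof.
rewrite -brM_subr; elim=> [|c x v [b [n ->]] _ IH].
  by rewrite -(subrr 0) brM_subr subrr; apply: span0.
by rewrite brM_linearr; apply: in_span_add => //; apply: in_span_scale; apply: brM_commutator.
Qed.

End Bracket.
End BimoduleMultiplication.

Theorem proposition3p9 (k : fieldType) (A : algType k) (M : lmodType k)
  (la : A -> M -> M) (ra : M -> A -> M)
  (dbr : A -> A -> tens2 A A) (dbrM : A -> M -> dsum A M) :
  is_bimodule la ra ->
  double_poisson_algebra dbr ->
  double_poisson_bimodule la ra dbr dbrM ->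
  (* well defined on A_natural x M *)
  (forall (a a' : A) (m : M), commAA (a - a') ->
     brM la ra dbrM a m = brM la ra dbrM a' m) /\
  (* well defined on A_natural x M_natural, with values in M_natural *)
  (forall (a a' : A) (m m' : M), commAA (a - a') -> commAM la ra (m - m') ->
     commAM la ra (brM la ra dbrM a m - brM la ra dbrM a' m')).
Proof.
case=> la_bil ra_flip_bil _ [la_mul ra_mul] la_ra _.
case=> linl linr [lea ler] mul _.
have ra_bil := bilinear_map_flip ra_flip_bil.
split=> [a a' m | a a' m m' aa' mm'].
  exact: (brM_eq_commAA la_bil ra_bil la_mul ra_mul linl mul).
rewrite (brM_eq_commAA la_bil ra_bil la_mul ra_mul linl mul m aa').
exact: (brM_commAM la_bil ra_bil la_mul ra_mul la_ra linr lea ler).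
Qed.
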